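(* Consider the drop-and-shuffle Markov chain $\mathcal{M}$ described in the context (with $\bot$ absorbing), with parameters $r\ge1$ and $p_d\in(1-\frac{1}{\sqrt r},1]$. Then the mean hitting time $m_\varepsilon(\bot)$ (the expected number of states visited from $\varepsilon$ before reaching $\bot$) is finite and $$m_\varepsilon(\bot)=\frac{1+2(1-p_d)}{1-r(1-p_d)^2}.$$ Moreover, $m_s(\mathrm{Pop}(s))=m_\varepsilon(\bot)$ for every recursive sub-tree root $s$.
   Context: Fix an integer $r\ge1$ and a drop probability $p_d\in[0,1]$. Let $S_{\mathrm{Sel}}=\{[\,],\ [H|T],\ [\,][H|T],\ [H|T][\,]\}$ (four formal symbols) and let $S_{\mathrm{Com}}$ be the set of nonempty tuples $(y_1,\ldots,y_l)$, $1\le l\le r$, of pairwise distinct elements of $\{1,\ldots,r\}$. Pairs in $S_{\mathrm{Sel}}\times S_{\mathrm{Com}}$ are written $\langle x,y\rangle$. Let $W=(S_{\mathrm{Sel}}\times S_{\mathrm{Com}})^*$ be the set of finite words of such pairs, including the empty word $\varepsilon$. The state space is $W\cup\{w\cdot x: w\in W,\ x\in S_{\mathrm{Sel}}\}\cup\{\bot\}$, the initial state is $\varepsilon$. Define $\mathrm{Pop}$ recursively by $\mathrm{Pop}(\varepsilon)=\bot$, $\mathrm{Pop}(w\cdot[\,][H|T])=w\cdot[H|T]$, $\mathrm{Pop}(w\cdot[H|T][\,])=w\cdot[\,]$, $\mathrm{Pop}(w\cdot[\,])=\mathrm{Pop}(w)$, $\mathrm{Pop}(w\cdot[H|T])=\mathrm{Pop}(w)$,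 $\mathrm{Pop}(w\cdot\langle x,(y_1)\rangle)=\mathrm{Pop}(w\cdot x)$, and $\mathrm{Pop}(w\cdot\langle x,(y_1,y_2,\ldots,y_l)\rangle)=w\cdot\langle x,(y_2,\ldots,y_l)\rangle$ for $l\ge2$. Transition probabilities, for $w\in W$ (unlisted ones are $0$): from $w$, go to $w\cdot[H|T][\,]$ and to $w\cdot[\,][H|T]$ each with probability $(1-p_d)^2/2$, to $w\cdot[\,]$ and to $w\cdot[H|T]$ each with probability $p_d(1-p_d)$, and to $\mathrm{Pop}(w)$ with probability $p_d^2$; from $w\cdot x$ with $x\in\{[H|T],[H|T][\,]\}$, go to $w\cdot\langle x,(y_1,\ldots,y_l)\rangle$ with probability $p_d^{r-l}(1-p_d)^l/l!$ for each $(y_1,\ldots,y_l)\in S_{\mathrm{Com}}$, and to $\mathrm{Pop}(w\cdot x)$ with probability $p_d^r$; from $w\cdot x$ with $x\in\{[\,],[\,][H|T]\}$, go to $\mathrm{Pop}(w\cdot x)$ with probability $1$; and $p(\bot,\bot)=1$. (This models SLD resolution of a test-generating Prolog program in which, at each resolution step, each matching clause is independently dropped with probability $p_d$ and the remaining ones are uniformly shuffled.) A recursive sub-tree root is a state in $W\setminus\{\varepsilon\}$, i.e. of the form $w\cdot\langle x,y\rangle$. For states $a$ and $b$, $m_a(b)\in[0,\infty]$ is the expected value of $\inf\{n\ge0: X_n=b\}$ for the chain started at $X_0=a$. *)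

From HB Require Import structures.
From mathcomp Require Import all_boot all_order all_algebra.
From mathcomp Require Import classical_sets reals constructive_ereal ereal.
From Stdlib Require List.
Set Implicit Arguments.
Unset Strict Implicit.
Unset Printing Implicit Defensive.
Import Order.TTheory GRing.Theory Num.Theory.
Local Open Scope ring_scope.

(* S_Sel: the four formal symbols
   SNil = [ ],  SCons = [H|T],  SNilCons = [ ][H|T],  SConsNil = [H|T][ ] *)
Inductive sel := SNil | SCons | SNilCons | SConsNil.

Definition letter := (sel * seq nat)%type.

(* IMPORTANT CONVENTION: words are stored REVERSED, i.e. the head
   of the list is the LAST letter of the word.
   W w      = the word (rev w) in W
   WX w x   = the state (rev w) . x
   Bot      = the absorbing state. *)
Inductive state := W of seq letter | WX of seq letter & sel | Bot.

Lemma sel_eq_dec (x y : sel) : {x = y} + {x <> y}.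
Proof. decide equality. Defined.

Lemma state_eq_dec (s t : state) : {s = t} + {s <> t}.
Proof.
have ld : forall a b : seq letter, {a = b} + {a <> b}.
  apply: List.list_eq_dec; move=> [x1 y1] [x2 y2].
  case: (sel_eq_dec x1 x2) => [->|h]; last by right; case.
  case: (List.list_eq_dec PeanoNat.Nat.eq_dec y1 y2) => [->|h]; first by left.
  by right; case.
decide equality; exact: sel_eq_dec.
Defined.

HB.instance Definition _ := hasDecEq.Build state (compareP state_eq_dec).

Fixpoint pop_W (w : seq letter) : state :=
  match w with
  | [::] => Bot
  | (x, y) :: w' =>
      match y with
      | _ :: ((_ :: _) as y') => W ((x, y') :: w')
      | _ =>                                          (* l = 1 : Pop(w'.x) *)
          match x with
          | SNilCons => WX w' SCons
          | SConsNil => WX w' SNil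
          | _ => pop_W w'
          end
      end
  end.

Definition pop_WX (w : seq letter) (x : sel) : state :=
  match x with
  | SNilCons => WX w SCons
  | SConsNil => WX w SNil
  | _ => pop_W w
  end.

Definition Pop (s : state) : state :=
  match s with W w => pop_W w | WX w x => pop_WX w x | Bot => Bot end.

Fixpoint seqs_len (r l : nat) : seq (seq nat) :=
  match l with
  | 0 => [:: [::]]
  | l'.+1 => flatten [seq [seq i :: s | s <- seqs_len r l'] | i <- iota 1 r]
  end.

Definition com_list (r : nat) : seq (seq nat) :=
  flatten [seq [seq s <- seqs_len r l | uniq s] | l <- iota 1 r].

Definition is_com (r : nat) (y : seq nat) : bool :=
  [&& (0 < size y)%N, uniq y & all (fun i => (1 <= i <= r)%N) y].

Definition valid_word (r : nat) (w : seq letter) : bool :=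
  all (fun xy => is_com r xy.2) w.

Section Chain.
Variables (R : realType) (r : nat) (pd : R).

(* Transition law: list of (probability, next state); unlisted ones are 0. *)
Definition step (s : state) : seq (R * state) :=
  match s with
  | W w => [:: ((1 - pd) ^+ 2 / 2, WX w SConsNil);
              ((1 - pd) ^+ 2 / 2, WX w SNilCons);
              (pd * (1 - pd), WX w SNil);
              (pd * (1 - pd), WX w SCons);
              (pd ^+ 2, pop_W w)]
  | WX w x =>
      match x with
      | SCons | SConsNil =>
          [seq (pd ^+ (r - size y) * (1 - pd) ^+ (size y) / (size y)`!%:R,
                W ((x, y) :: w)) | y <- com_list r]
          ++ [:: (pd ^+ r, pop_WX w x)]
      | _ => [:: (1, pop_WX w x)]
      end
  | Bot => [:: (1, Bot)]
  end.

(* Law of the trajectory (X_0, ..., X_N) started at a, as a list of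
   (probability, trajectory) pairs. *)
Fixpoint traj (N : nat) (a : state) : seq (R * seq state) :=
  match N with
  | 0 => [:: (1, [:: a])]
  | N'.+1 =>
      flatten [seq [seq (pc.1 * qp.1, a :: qp.2) | qp <- traj N' pc.2]
              | pc <- step a]
  end.

(* E_a[ min(T_b, N) ] where T_b = inf{n >= 0 : X_n = b}; on a trajectory
   X_0..X_N, find gives the first index of b (N+1 if absent). *)
Definition trunc_hit_mean (N : nat) (a b : state) : R :=
  \sum_(qp <- traj N a) qp.1 * (minn (find (pred1 b) qp.2) N)%:R.

(* m_a(b) = E_a[T_b] in [0, +oo], via monotone convergence
   E[T] = sup_N E[min(T, N)]. *)
Definition mean_hit (a b : state) : \bar R :=
  ereal_sup (range (fun N => (trunc_hit_mean N a b)%:E)).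

End Chain.

(* Let T be the time the chain needs to get from eps to bot.  The chain never
   looks below the top letter of its word, so popping any letter takes an
   independent copy of T; in particular m_s(Pop s) = m_eps(bot).  From eps the
   chain pops at once with probability pd^2 and otherwise pushes a selector; a
   [H|T] selector then pushes a tuple of L ~ Bin(r, q) kept clauses, q = 1 - pd,
   each of which costs a later copy of T.  Hence h = m_eps(bot) solves
   h = 1 + q (2 + r q h), i.e. h is the claimed value when r q^2 < 1.
   To avoid a strong Markov property we argue on truncated means: a potential
   built from h is harmonic off bot and bounds them from above, and it is
   dominated by a multiplicative potential that the chain shrinks by a factor
   lam > 1 per step, so the truncated means converge to it geometrically. *)

From mathcomp Require Import all_boot all_order all_algebra.
From mathcomp Require Import classical_sets reals constructive_ereal ereal.
From mathcomp Require Import boolp.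
From mathcomp Require Import ring lra.
Import Order.TTheory GRing.Theory Num.Theory.

Set Implicit Arguments.
Unset Strict Implicit.
Unset Printing Implicit Defensive.

Section SeqsOver.
Variable T : eqType.

Fixpoint seqs_over (A : seq T) (l : nat) : seq (seq T) :=
  if l is l'.+1 then flatten [seq [seq i :: s | s <- seqs_over A l'] | i <- A]
  else [:: [::]].

Lemma mem_seqs_over A l s :
  (s \in seqs_over A l) = (size s == l) && all (mem A) s.
Proof.
elim: l s => [|l IH] s /=; first by case: s.
apply/flatten_mapP/idP => [[j jA /mapP[t tA ->]]|].
  by move: tA; rewrite /= IH => /andP[/eqP <- ->]; rewrite eqxx jA.
case: s => //= i s /andP[st /andP[iA sA]]; exists i => //.
by apply/mapP; exists s; rewrite // IH -eqSS st.
Qed.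

Lemma uniq_seqs_over A l : uniq A -> uniq (seqs_over A l).
Proof.
move=> uA; elim: l => //= l IH; move: uA.
elim: {1 3}A => //= a B IHB /andP[aB uB].
rewrite cat_uniq map_inj_uniq ?IH //; last by move=> s t [].
rewrite IHB // andbT; apply/hasPn => _ /flatten_mapP[j jA /mapP[s _ ->]].
by apply/mapP => -[t _ [eja _]]; move: aB; rewrite -eja jA.
Qed.

Lemma count_uniq_seqs_over A l : uniq A -> count uniq (seqs_over A l) = size A ^_ l.
Proof.
elim: l A => [|l IH] A uA /=; first by rewrite ffactn0.
rewrite count_flatten sumnE !big_map (eq_big_seq (fun=> (size A).-1 ^_ l)) => [|i iA].
  rewrite big_const_seq count_predT iter_addn_0.
  by case: (size A) => [|n]; rewrite ?muln0 // ffactSS mulnC.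
rewrite count_map -(size_rem iA) -IH ?rem_uniq // -!size_filter.
apply/perm_size/uniq_perm; rewrite ?filter_uniq ?uniq_seqs_over ?rem_uniq //.
move=> s; rewrite !mem_filter !mem_seqs_over /=.
have -> : all (mem (rem i A)) s = (i \notin s) && all (mem A) s.
  elim: s => //= x s ->; rewrite (mem_rem_uniq _ uA) !inE negb_or eq_sym.
  by case: (i != x); case: (x \in A); case: (i \in s).
by case: (i \in s); case: (uniq s); case: (size s == l).
Qed.

End SeqsOver.

Lemma seqs_lenE r l : seqs_len r l = seqs_over (iota 1 r) l.
Proof. by elim: l => //= l ->. Qed.

Lemma com_list_size_gt0 r y : y \in com_list r -> (0 < size y)%N.
Proof.
case/flatten_mapP=> l; rewrite mem_iota mem_filter seqs_lenE mem_seqs_over.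
by case/andP=> l_gt0 _ /and3P[_ /eqP ->].
Qed.

Local Open Scope ring_scope.

Lemma sum_com_list_size (R : nzSemiRingType) r (g : nat -> R) :
  \sum_(y <- com_list r) g (size y) = \sum_(l <- iota 1 r) (r ^_ l)%:R * g l.
Proof.
rewrite big_flatten big_map; apply: eq_bigr => l _.
rewrite (eq_big_seq (fun=> g l)) => [|y]; last first.
  by rewrite mem_filter seqs_lenE mem_seqs_over => /and3P[_ /eqP ->].
rewrite big_const_seq count_predT size_filter seqs_lenE.
by rewrite count_uniq_seqs_over ?iota_uniq // size_iota iter_addr_0 mulr_natl.
Qed.

Section RealInequalities.
Variable R : realDomainType.

Lemma bernoulli_ineq (x : R) n : 0 <= x -> 1 + n%:R * x <= (1 + x) ^+ n.
Proof.
move=> x_ge0; elim: n => [|n IH]; first by rewrite mul0r addr0.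
have nx2_ge0 : 0 <= n%:R * x * x by rewrite !mulr_ge0.
rewrite exprS mulrS; apply: le_trans (ler_wpM2l _ IH); nra.
Qed.

Lemma addr_le_mul_sub1 (K a1 a2 c1 c2 : R) :
  0 <= K -> 1 <= c1 -> 1 <= c2 -> a1 <= K * (c1 - 1) -> a2 <= K * (c2 - 1) ->
  a1 + a2 <= K * (c1 * c2 - 1).
Proof.
move=> K_ge0 c1_ge1 c2_ge1 a1_le a2_le.
have : 0 <= K * ((c1 - 1) * (c2 - 1)) by rewrite !mulr_ge0 // subr_ge0.
have -> : K * (c1 * c2 - 1) = K * (c1 - 1) + K * (c2 - 1) + K * ((c1 - 1) * (c2 - 1)).
  by ring.
lra.
Qed.

Lemma sum_le_prod_sub1 (I : Type) (s : seq I) (a c : I -> R) (K : R) :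
  0 <= K -> (forall i, 1 <= c i) -> (forall i, a i <= K * (c i - 1)) ->
  \sum_(i <- s) a i <= K * (\prod_(i <- s) c i - 1).
Proof.
move=> K_ge0 c_ge1 a_le; elim: s => [|i s IH]; first by rewrite !big_nil subrr mulr0.
rewrite !big_cons addr_le_mul_sub1 //.
by elim/big_ind: _ => // u v u_ge1 v_ge1; rewrite -[1]mul1r ler_pM.
Qed.

Lemma expr_mul_one_sub_le1 (x : R) n :
  0 <= x -> (1 + x) ^+ n * (1 - n%:R * x) <= 1.
Proof.
move=> x_ge0; elim: n => [|n IH]; first by rewrite expr0 mul0r subr0 mul1r.
have pow_ge0 : 0 <= (1 + x) ^+ n by rewrite exprn_ge0 // addr_ge0.
apply: le_trans IH; rewrite exprSr -mulrA ler_wpM2l //.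
have : 0 <= n.+1%:R * x * x by rewrite !mulr_ge0.
rewrite mulrS; lra.
Qed.

End RealInequalities.

Lemma exists_cube_le (R : realFieldType) (a G : R) :
  0 <= a -> a < G -> exists2 lam : R, 1 < lam & lam ^+ 3 * a <= G.
Proof.
move=> a_ge0 aG; have G_gt0 : 0 < G by apply: le_lt_trans aG.
pose e := (G - a) / (7 * G).
have e7 : 7 * e * G = G - a by rewrite /e; field; rewrite gt_eqF.
have e_gt0 : 0 < e by rewrite divr_gt0 ?subr_gt0 // mulr_gt0.
have e_le1 : e <= 1.
  have : e * (7 * G) <= 1 * (7 * G) by lra.
  by rewrite ler_pM2r // mulr_gt0.
exists (1 + e); first lra.
have cube : (1 + e) ^+ 3 <= 1 + 7 * e.
  have e2 : e * e <= e := ler_piMr (ltW e_gt0) e_le1.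
  have e3 : e * e * e <= e.
    exact: le_trans (ler_piMr (mulr_ge0 (ltW e_gt0) (ltW e_gt0)) e_le1) e2.
  have -> : (1 + e) ^+ 3 = 1 + 3 * e + 3 * (e * e) + e * e * e by ring.
  lra.
apply: le_trans (ler_wpM2r a_ge0 cube) _.
have : 7 * e * a <= 7 * e * G by apply: ler_wpM2l; [lra | exact: ltW].
lra.
Qed.

Lemma ereal_sup_geometric_gap (R : realType) (t : nat -> R) (h lam C : R) :
  1 < lam -> (forall N, t N <= h) -> (forall N, lam ^+ N * (h - t N) <= C) ->
  ereal_sup (range (fun N => (t N)%:E)) = h%:E.
Proof.
move=> lam_gt1 t_le gap; apply/le_anti/andP; split.
  by apply: ge_ereal_sup => _ [N _ <-]; rewrite lee_fin.
apply/lee_subgt0Pr => eps eps_gt0.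
have lam1_gt0 : 0 < lam - 1 by rewrite subr_gt0.
pose N := (Num.truncn (C / (eps * (lam - 1)))).+1.
have N_gt : C / (eps * (lam - 1)) < N%:R by apply: truncnS_gt.
apply: le_ereal_sup_tmp; exists (t N)%:E; first by exists N.
rewrite -EFinB lee_fin.
have bern := bernoulli_ineq N (ltW lam1_gt0); rewrite subrKC in bern.
have gapN : (1 + N%:R * (lam - 1)) * (h - t N) <= C.
  by apply: le_trans (gap N); apply: ler_wpM2r; rewrite ?subr_ge0.
have C_lt : C < N%:R * (eps * (lam - 1)) by rewrite -ltr_pdivrMr ?mulr_gt0.
rewrite lerBlDr -lerBlDl leNgt; apply/negP => eps_lt.
have : N%:R * (lam - 1) * eps <= N%:R * (lam - 1) * (h - t N).
  by rewrite ler_wpM2l ?mulr_ge0 ?ltW.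
nra.
Qed.

Section Binomial.
Variable R : comNzRingType.

Lemma sum_iota1 (f : nat -> R) n : \sum_(l <- iota 1 n) f l = \sum_(i < n) f i.+1.
Proof. by rewrite (iotaDl 1 0 n) big_map -val_enum_ord big_map big_enum. Qed.

Lemma binomial_sum_pos (a b : R) n :
  \sum_(l <- iota 1 n) 'C(n, l)%:R * (a ^+ (n - l) * b ^+ l) = (a + b) ^+ n - a ^+ n.
Proof.
rewrite exprDn big_ord_recl /= subn0 expr0 mulr1 bin0 mulr1n addrC addKr sum_iota1.
by apply: eq_bigr => i _; rewrite mulr_natl.
Qed.

Lemma binomial_mean (a b : R) n :
  \sum_(l <- iota 1 n) 'C(n, l)%:R * (a ^+ (n - l) * b ^+ l) * l%:R
    = n%:R * b * (a + b) ^+ n.-1.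
Proof.
case: n => [|n]; first by rewrite big_nil !mul0r.
rewrite sum_iota1 /= exprDn mulr_sumr; apply: eq_bigr => i _.
have := mul_bin_diag n.+1 i; rewrite subSS exprS /= => bin_diag.
have -> : 'C(n.+1, i.+1)%:R * (a ^+ (n - i) * (b * b ^+ i)) * i.+1%:R
  = (i.+1 * 'C(n.+1, i.+1))%:R * b * (a ^+ (n - i) * b ^+ i) :> R.
  by rewrite natrM; ring.
by rewrite -bin_diag natrM -mulr_natl; ring.
Qed.

End Binomial.

Section ComWeight.
Variables (R : numFieldType) (r : nat) (pd : R).

Definition com_weight (l : nat) : R := pd ^+ (r - l) * (1 - pd) ^+ l / l`!%:R.

Lemma sum_com_weight (g : nat -> R) :
  \sum_(y <- com_list r) com_weight (size y) * g (size y)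
  = \sum_(l <- iota 1 r) 'C(r, l)%:R * (pd ^+ (r - l) * (1 - pd) ^+ l) * g l.
Proof.
rewrite (sum_com_list_size r (fun l => com_weight l * g l)); apply: eq_bigr => l _.
rewrite /com_weight -bin_ffact natrM.
by field; rewrite pnatr_eq0 -lt0n fact_gt0.
Qed.

Lemma com_weight_pgf z :
  \sum_(y <- com_list r) com_weight (size y) * z ^+ size y
  = (pd + (1 - pd) * z) ^+ r - pd ^+ r.
Proof.
rewrite (sum_com_weight (fun l => z ^+ l)) -binomial_sum_pos.
apply: eq_bigr => l _; rewrite exprMn; ring.
Qed.

Lemma com_weight_mass : \sum_(y <- com_list r) com_weight (size y) = 1 - pd ^+ r.
Proof.
have := com_weight_pgf 1; rewrite mulr1 subrKC expr1n => <-.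
by apply: eq_bigr => y _; rewrite expr1n mulr1.
Qed.

Lemma com_weight_mean :
  \sum_(y <- com_list r) com_weight (size y) * (size y)%:R = r%:R * (1 - pd).
Proof.
by rewrite (sum_com_weight (fun l => l%:R)) binomial_mean subrKC expr1n mulr1.
Qed.

Lemma com_weight_affine (A B : R) :
  \sum_(y <- com_list r) com_weight (size y) * ((size y)%:R * A + B)
  = r%:R * (1 - pd) * A + (1 - pd ^+ r) * B.
Proof.
rewrite -com_weight_mean -com_weight_mass mulr_suml mulr_suml -big_split /=.
by apply: eq_bigr => y _; ring.
Qed.

End ComWeight.

Section Chain.
Variables (R : realType) (r : nat) (pd : R).

Lemma step_mass a : \sum_(pc <- step r pd a) pc.1 = 1.
Proof.
case: a => [w|w []|] /=; rewrite ?big_cat ?big_map !big_cons big_nil /= ?addr0 //.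
- by field.
- by have := com_weight_mass r pd; rewrite /com_weight => ->; rewrite subrK.
- by have := com_weight_mass r pd; rewrite /com_weight => ->; rewrite subrK.
Qed.

Lemma step_prob_ge0 a pc : 0 <= pd <= 1 -> pc \in step r pd a -> 0 <= pc.1.
Proof.
case/andP=> pd_ge0 pd_le1; have q_ge0 : 0 <= 1 - pd by rewrite subr_ge0.
suff /allP : all (fun pc => 0 <= pc.1) (step r pd a) by apply.
case: a => [w|w []|] /=; rewrite ?all_cat ?all_map /= ?andbT ?ler01 //;
  rewrite ?exprn_ge0 ?mulr_ge0 ?invr_ge0 ?andbT //.
all: by apply/allP => y _ /=; rewrite !mulr_ge0 ?exprn_ge0 ?invr_ge0.
Qed.

Lemma traj_mass N a : \sum_(qp <- traj r pd N a) qp.1 = 1.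
Proof.
elim: N a => [|N IH] a /=; first by rewrite big_seq1.
rewrite big_flatten big_map -(step_mass a); apply: eq_bigr => pc _.
by rewrite big_map -mulr_sumr IH mulr1.
Qed.

Lemma trunc_hit_mean0 a b : trunc_hit_mean r pd 0 a b = 0.
Proof. by rewrite /trunc_hit_mean big_seq1 minn0 mulr0. Qed.

Lemma trunc_hit_meanS N a b :
  trunc_hit_mean r pd N.+1 a b =
  if a == b then 0
  else \sum_(pc <- step r pd a) pc.1 * (1 + trunc_hit_mean r pd N pc.2 b).
Proof.
rewrite /trunc_hit_mean /= big_flatten big_map; case: eqP => [->|/eqP/negbTE ab].
  rewrite big1 // => pc _; rewrite big_map big1 // => qp _.
  by rewrite /= eqxx min0n mulr0.
apply: eq_bigr => pc _; rewrite big_map /= ab.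
rewrite -[X in _ * (X + _)](traj_mass N pc.2) -big_split mulr_sumr /=.
by apply: eq_bigr => qp _; rewrite minnSS -addn1 natrD; ring.
Qed.

End Chain.

Section Comparison.
Variables (R : realType) (r : nat) (pd : R) (b : state).
Hypothesis pd01 : 0 <= pd <= 1.

Local Notation P U a := (\sum_(pc <- step r pd a) pc.1 * U pc.2).

Lemma trunc_hit_mean_le (U : state -> R) :
  (forall s, 0 <= U s) -> (forall a, a <> b -> 1 + P U a <= U a) ->
  forall N a, trunc_hit_mean r pd N a b <= U a.
Proof.
move=> U_ge0 U_super; elim=> [|N IH] a; first by rewrite trunc_hit_mean0.
rewrite trunc_hit_meanS; case: eqP => [_|ab]; first exact: U_ge0.
apply: le_trans (U_super _ ab).
rewrite -[X in _ <= X + _](step_mass r pd a) -big_split /= !big_seq.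
apply: ler_sum => pc /(step_prob_ge0 pd01) p_ge0.
by rewrite -[X in _ <= X + _]mulr1 -mulrDr ler_wpM2l // lerD2l.
Qed.

(* [U a - trunc_hit_mean N a b] is the mean of [U] at time N on the event that
   [b] has not been reached; domination by the lam-contracted [F] makes it
   O(lam^-N). *)
Lemma trunc_hit_mean_gap (U F : state -> R) (lam K : R) :
  0 <= lam -> 0 <= K -> U b = 0 ->
  (forall a, a <> b -> U a = 1 + P U a) ->
  (forall a, a <> b -> lam * P F a <= F a) ->
  (forall s, U s <= K * F s) ->
  forall N a, lam ^+ N * (U a - trunc_hit_mean r pd N a b) <= K * F a.
Proof.
move=> lam_ge0 K_ge0 Ub U_harm F_contr U_le N.
elim: N => [|N IH] a; first by rewrite trunc_hit_mean0 expr0 mul1r subr0.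
rewrite trunc_hit_meanS; case: eqP => [->|ab].
  by rewrite Ub subr0 mulr0 -Ub U_le.
have -> : U a - P (fun s => 1 + trunc_hit_mean r pd N s b) a
          = P (fun s => U s - trunc_hit_mean r pd N s b) a.
  rewrite (U_harm _ ab) -{1}(step_mass r pd a) -big_split -sumrB /=.
  by apply: eq_bigr => pc _; ring.
apply: le_trans (ler_wpM2l K_ge0 (F_contr _ ab)).
rewrite exprS -mulrA [K * _]mulrCA; apply: (ler_wpM2l lam_ge0).
rewrite !mulr_sumr !big_seq ler_sum // => pc /(step_prob_ge0 pd01) p_ge0.
by rewrite mulrCA [K * _]mulrCA; apply: (ler_wpM2l p_ge0).
Qed.

End Comparison.

(* Since the chain never inspects the letters below the top, from [W (v ++ sw)]
   it follows the chain from [W v] with [sw] appended, [Bot] being replaced by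
   [pop_W sw]. *)
Definition lift_state (sw : seq letter) (s : state) : state :=
  match s with W v => W (v ++ sw) | WX v x => WX (v ++ sw) x | Bot => pop_W sw end.

Lemma pop_W_cat sw v : pop_W (v ++ sw) = lift_state sw (pop_W v).
Proof. by elim: v => [|[x [|a [|b c]]] v IH] //=; case: x. Qed.

Definition word_size (w : seq letter) : nat := sumn [seq (size l.2).+1 | l <- w].

Lemma word_size_cat v w : word_size (v ++ w) = (word_size v + word_size w)%N.
Proof. by rewrite /word_size map_cat sumn_cat. Qed.

Lemma pop_W_word_size w v x :
  pop_W w = W v \/ pop_W w = WX v x -> (word_size v < word_size w)%N.
Proof.
elim: w => [|[x' y] w IH] /=; first by case.
have lt_w : (word_size w < word_size ((x', y) :: w))%N.
  by rewrite /word_size /= addSn ltnS leq_addl.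
case: y lt_w => [|a [|b c]] lt_w; last first.
  by case=> // -[<-]; rewrite /word_size /= ltn_add2r.
all: case: x' lt_w => lt_w; do [by move/IH/ltn_trans; apply | by case=> // -[<-]].
Qed.

Lemma lift_state_neq_pop sw a : a <> Bot -> lift_state sw a <> pop_W sw.
Proof.
case: a => [v|v x|] // _ /esym pop_eq.
- have := @pop_W_word_size sw (v ++ sw) SNil (or_introl pop_eq).
  by rewrite word_size_cat ltnNge leq_addl.
- have := @pop_W_word_size sw (v ++ sw) x (or_intror pop_eq).
  by rewrite word_size_cat ltnNge leq_addl.
Qed.

Section Lift.
Variables (R : realType) (r : nat) (pd : R) (sw : seq letter).

Lemma step_lift a : a <> Bot ->
  step r pd (lift_state sw a) = [seq (pc.1, lift_state sw pc.2) | pc <- step r pd a].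
Proof. by case: a => [v|v []|] //= _; rewrite ?pop_W_cat // map_cat -map_comp. Qed.

Lemma trunc_hit_mean_lift N a :
  trunc_hit_mean r pd N (lift_state sw a) (pop_W sw) = trunc_hit_mean r pd N a Bot.
Proof.
elim: N a => [|N IH] a; first by rewrite !trunc_hit_mean0.
rewrite !trunc_hit_meanS; case: (a =P Bot) => [->|aB]; first by rewrite !eqxx.
case: eqP => [/(lift_state_neq_pop aB)[]|_].
by rewrite step_lift // big_map; apply: eq_bigr => pc _ /=; rewrite IH.
Qed.

End Lift.

Lemma mean_hit_pop (R : realType) r (pd : R) w :
  mean_hit r pd (W w) (Pop (W w)) = mean_hit r pd (W [::]) Bot.
Proof.
rewrite /mean_hit /=.
suff -> : (fun N => (trunc_hit_mean r pd N (W w) (pop_W w))%:E)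
          = (fun N => (trunc_hit_mean r pd N (W [::]) Bot)%:E) by [].
by apply/funext => N; rewrite -(trunc_hit_mean_lift r pd w N (W [::])).
Qed.

Section HitPotential.
Variables (R : realType) (r : nat) (pd h : R).
Local Notation q := (1 - pd).

(* With [h] the time needed to pop one letter, [sel_cost x] and [tail_cost x]
   are the expected times from [WX w x] and from [pop_WX w x] to [pop_W w]. *)
Definition sel_cost (x : sel) : R :=
  match x with SNil => 1 | SCons => 1 + r%:R * q * h | _ => 2 + r%:R * q * h end.

Definition tail_cost (x : sel) : R :=
  match x with SNilCons => sel_cost SCons | SConsNil => sel_cost SNil | _ => 0 end.

Definition letter_cost (l : letter) : R := (size l.2).-1%:R * h + tail_cost l.1.

Definition word_cost (w : seq letter) : R := \sum_(l <- w) letter_cost l.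

Definition hit_pot (s : state) : R :=
  match s with
  | W w => h + word_cost w
  | WX w x => sel_cost x + word_cost w
  | Bot => 0
  end.

Lemma word_cost_cons l w : word_cost (l :: w) = letter_cost l + word_cost w.
Proof. exact: big_cons. Qed.

Lemma hit_pot_pop w : hit_pot (pop_W w) = word_cost w.
Proof.
elim: w => [|[x [|a [|b c]]] w IH]; first by rewrite /word_cost big_nil.
- by case: x; rewrite /= word_cost_cons /letter_cost /= mul0r !add0r ?IH.
- by case: x; rewrite /= word_cost_cons /letter_cost /= mul0r !add0r ?IH.
- by rewrite /= !word_cost_cons /letter_cost /= -addn1 natrD; ring.
Qed.

Lemma hit_pot_ge0 s : 0 <= h -> 0 <= pd <= 1 -> 0 <= hit_pot s.
Proof.
move=> h_ge0 /andP[_ pd_le1]; have rqh_ge0 : 0 <= r%:R * q * h.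
  by rewrite !mulr_ge0 // subr_ge0.
have tail_ge0 x : 0 <= tail_cost x by case: x => /=; lra.
have cost_ge0 w : 0 <= word_cost w.
  by apply: sumr_ge0 => -[x y] _; rewrite addr_ge0 ?mulr_ge0.
by case: s => [w|w x|] //=; rewrite addr_ge0 //; case: x => /=; lra.
Qed.

Lemma hit_pot_push x w :
  \sum_(y <- com_list r) com_weight r pd (size y) * hit_pot (W ((x, y) :: w))
  = r%:R * q * h + (1 - pd ^+ r) * (tail_cost x + word_cost w).
Proof.
rewrite -com_weight_affine; apply: eq_big_seq => y /com_list_size_gt0.
rewrite /= word_cost_cons /letter_cost /=.
by case: (size y) => // n _; rewrite mulrS; ring.
Qed.

Hypothesis hE : h = 1 + q * (2 + r%:R * q * h).

Lemma hit_pot_harmonic a :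
  a <> Bot -> hit_pot a = 1 + \sum_(pc <- step r pd a) pc.1 * hit_pot pc.2.
Proof.
case: a => [w|w []|] // _; rewrite /= ?big_cat ?big_map !big_cons big_nil /= ?hit_pot_pop.
- by rewrite {1}hE; field.
- by ring.
- by rewrite (hit_pot_push SCons) /=; ring.
- by ring.
- by rewrite (hit_pot_push SConsNil) /=; ring.
Qed.

End HitPotential.

Section WeightPotential.
Variables (R : realType) (r : nat) (pd G lam : R).
Local Notation q := (1 - pd).

(* E[G^L] for the number L ~ Bin(r, q) of kept clauses. *)
Definition com_factor : R := (pd + q * G) ^+ r.

Definition sel_weight (x : sel) : R :=
  match x with SNil => lam | SCons => lam * com_factor | _ => lam ^+ 2 * com_factor end.

Definition tail_weight (x : sel) : R :=
  match x with SNilCons => sel_weight SCons | SConsNil => sel_weight SNil | _ => 1 end.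

Definition letter_weight (l : letter) : R := G ^+ (size l.2).-1 * tail_weight l.1.

Definition word_weight (w : seq letter) : R := \prod_(l <- w) letter_weight l.

Definition weight_pot (s : state) : R :=
  match s with
  | W w => G * word_weight w
  | WX w x => sel_weight x * word_weight w
  | Bot => 1
  end.

Lemma word_weight_cons l w : word_weight (l :: w) = letter_weight l * word_weight w.
Proof. exact: big_cons. Qed.

Lemma weight_pot_pop w : weight_pot (pop_W w) = word_weight w.
Proof.
elim: w => [|[x [|a [|b c]]] w IH]; first by rewrite /word_weight big_nil.
- by case: x; rewrite /= word_weight_cons /letter_weight /= !mul1r ?IH.
- by case: x; rewrite /= word_weight_cons /letter_weight /= !mul1r ?IH.
- by rewrite /= !word_weight_cons /letter_weight /= exprS; ring.
Qed.

Lemma weight_pot_push x w :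
  \sum_(y <- com_list r) com_weight r pd (size y) * weight_pot (W ((x, y) :: w))
  = (com_factor - pd ^+ r) * (tail_weight x * word_weight w).
Proof.
rewrite -com_weight_pgf mulr_suml; apply: eq_big_seq => y /com_list_size_gt0.
rewrite /= word_weight_cons /letter_weight /=.
by case: (size y) => // n _ /=; rewrite [G ^+ n.+1]exprS; ring.
Qed.

Lemma weight_pot_WX w x :
  lam * \sum_(pc <- step r pd (WX w x)) pc.1 * weight_pot pc.2 = weight_pot (WX w x).
Proof.
case: x; rewrite /= ?big_cat ?big_map !big_cons big_nil /= ?weight_pot_pop; try ring.
- by rewrite (weight_pot_push SCons) /=; ring.
- by rewrite (weight_pot_push SConsNil) /=; ring.
Qed.

Hypotheses (pd01 : 0 <= pd <= 1) (G_ge1 : 1 <= G) (lam_ge1 : 1 <= lam).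

Lemma com_factor_ge1 : 1 <= com_factor.
Proof.
apply: exprn_ege1; case/andP: pd01 => pd_ge0 pd_le1.
have : 0 <= q * (G - 1) by rewrite mulr_ge0 // subr_ge0.
lra.
Qed.

Lemma sel_weight_ge1 x : 1 <= sel_weight x.
Proof.
have Z_ge1 := com_factor_ge1; have lam2_ge1 : 1 <= lam ^+ 2 by exact: exprn_ege1.
by case: x => //=; rewrite -[1]mul1r ler_pM.
Qed.

Lemma tail_weight_ge1 x : 1 <= tail_weight x.
Proof. by case: x => //; exact: (sel_weight_ge1 SCons). Qed.

Lemma letter_weight_ge1 l : 1 <= letter_weight l.
Proof. by rewrite -[1]mul1r ler_pM ?exprn_ege1 ?tail_weight_ge1. Qed.

Lemma word_weight_ge1 w : 1 <= word_weight w.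
Proof.
elim: w => [|l w IH]; first by rewrite /word_weight big_nil.
by rewrite word_weight_cons -[1]mul1r ler_pM ?letter_weight_ge1.
Qed.

Hypothesis contraction :
  lam * (q ^+ 2 * lam ^+ 2 * com_factor + pd * q * lam * (1 + com_factor) + pd ^+ 2) <= G.

Lemma weight_pot_contract a :
  a <> Bot -> lam * \sum_(pc <- step r pd a) pc.1 * weight_pot pc.2 <= weight_pot a.
Proof.
case: a => [w|w x|] // _; last by rewrite weight_pot_WX.
have P_ge0 : 0 <= word_weight w by apply: le_trans (word_weight_ge1 w).
apply: le_trans (ler_wpM2r P_ge0 contraction); rewrite le_eqVlt; apply/predU1P; left.
by rewrite /= !big_cons big_nil /= weight_pot_pop; field.
Qed.

End WeightPotential.

Section Domination.
Variables (R : realType) (r : nat) (pd h G lam : R).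
Hypotheses (h_ge0 : 0 <= h) (pd01 : 0 <= pd <= 1) (G_gt1 : 1 < G) (lam_gt1 : 1 < lam).
Local Notation q := (1 - pd).

Definition cost_bound : R := h / (G - 1) + (1 + r%:R * q * h) / (lam - 1).

Let rqh_ge0 : 0 <= r%:R * q * h.
Proof. by case/andP: pd01 => _ pd_le1; rewrite !mulr_ge0 // subr_ge0. Qed.

Let le_div_mul (A d c : R) : 0 <= A -> 0 < d -> d <= c -> A <= A / d * c.
Proof.
move=> A_ge0 d_gt0 dc; apply: le_trans (ler_wpM2l (divr_ge0 A_ge0 (ltW d_gt0)) dc).
by rewrite divfK ?gt_eqF.
Qed.

Lemma cost_bound_ge0 : 0 <= cost_bound.
Proof.
have [h0 G1 lam1 rqh] := And4 h_ge0 G_gt1 lam_gt1 rqh_ge0.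
by apply: addr_ge0; apply: divr_ge0; lra.
Qed.

Lemma letter_cost_le l :
  letter_cost r pd h l <= cost_bound * (letter_weight r pd G lam l - 1).
Proof.
have [h0 G1 lam1 rqh] := And4 h_ge0 G_gt1 lam_gt1 rqh_ge0.
have tail_le x : tail_cost r pd h x <= cost_bound * (tail_weight r pd G lam x - 1).
  have tail_part : (1 + r%:R * q * h) / (lam - 1) <= cost_bound.
    by rewrite lerDr divr_ge0 //; lra.
  have Z_ge1 := com_factor_ge1 r pd01 (ltW G_gt1).
  case: x => /=; rewrite ?subrr ?mulr0 //.
  - have lamZ : lam <= lam * com_factor r pd G by rewrite ler_peMr //; lra.
    apply: le_trans (ler_wpM2r _ tail_part); first by apply: le_div_mul; lra.
    lra.
  - apply: le_trans (ler_wpM2r _ tail_part); last lra.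
    by rewrite divfK ?subr_eq0 ?gt_eqF //; lra.
case: l => x y; rewrite /letter_cost /letter_weight /=.
apply: addr_le_mul_sub1 (tail_le x).
- exact: cost_bound_ge0.
- by rewrite exprn_ege1 // ltW.
- by apply: tail_weight_ge1 => //; apply: ltW.
have G_part : h / (G - 1) <= cost_bound by rewrite lerDl divr_ge0 //; lra.
have G1_ge0 : 0 <= G - 1 by rewrite subr_ge0 ltW.
have := bernoulli_ineq (size y).-1 G1_ge0; rewrite subrKC => bern.
have -> : (size y).-1%:R * h = h / (G - 1) * ((size y).-1%:R * (G - 1)).
  by field; rewrite subr_eq0 gt_eqF.
apply: le_trans (ler_wpM2r _ G_part); last by rewrite subr_ge0 exprn_ege1 // ltW.
by rewrite ler_wpM2l ?divr_ge0 //; lra.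
Qed.

Definition domination_const : R := 2 + r%:R * q * h + h + cost_bound.

Lemma domination_const_ge0 : 0 <= domination_const.
Proof.
have [h0 rqh K_ge0] := And3 h_ge0 rqh_ge0 cost_bound_ge0.
by rewrite /domination_const; lra.
Qed.

Lemma hit_pot_le_weight_pot s :
  hit_pot r pd h s <= domination_const * weight_pot r pd G lam s.
Proof.
have [h0 G1 lam1 rqh] := And4 h_ge0 (ltW G_gt1) (ltW lam_gt1) rqh_ge0.
have cost_le w : word_cost r pd h w <= cost_bound * (word_weight r pd G lam w - 1).
  rewrite /word_cost /word_weight.
  by apply: sum_le_prod_sub1 cost_bound_ge0 _ letter_cost_le => l; apply: letter_weight_ge1.
suff head_le c b w : 0 <= c <= 2 + r%:R * q * h + h -> 1 <= b ->
    c + word_cost r pd h w <= domination_const * (b * word_weight r pd G lam w).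
  case: s => [w|w x|] /=; last by rewrite mulr1 domination_const_ge0.
  - by apply: head_le => //; apply/andP; split; lra.
  - apply: head_le; last exact: sel_weight_ge1.
    by case: x => /=; apply/andP; split; lra.
move=> /andP[c_ge0 c_le] b_ge1; have P_ge1 : 1 <= word_weight r pd G lam w.
  exact: word_weight_ge1.
have K_ge0 := cost_bound_ge0.
have D_ge0 := domination_const_ge0.
have bP : word_weight r pd G lam w <= b * word_weight r pd G lam w.
  by rewrite ler_peMl //; lra.
apply: le_trans (ler_wpM2l D_ge0 bP).
by have := cost_le w; rewrite /domination_const; nra.
Qed.

End Domination.

Lemma contraction_le_cube (R : realDomainType) (pd lam Z : R) :
  0 <= pd <= 1 -> 1 <= lam -> 0 <= Z ->
  lam * ((1 - pd) ^+ 2 * lam ^+ 2 * Z + pd * (1 - pd) * lam * (1 + Z) + pd ^+ 2)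
  <= lam ^+ 3 * ((1 - pd) * Z + pd).
Proof.
move=> /andP[pd_ge0 pd_le1] lam_ge1 Z_ge0.
have lam_ge0 : 0 <= lam by apply: le_trans lam_ge1.
have lam32 : lam ^+ 2 <= lam ^+ 3 by rewrite [lam ^+ 3]exprS ler_peMl ?exprn_ge0.
have lam31 : lam <= lam ^+ 3.
  by apply: le_trans lam32; rewrite expr2 ler_peMl.
have A_ge0 : 0 <= pd * (1 - pd) * (1 + Z) * (lam ^+ 3 - lam ^+ 2).
  by rewrite !mulr_ge0 ?subr_ge0 // addr_ge0.
have B_ge0 : 0 <= pd ^+ 2 * (lam ^+ 3 - lam) by rewrite mulr_ge0 ?sqr_ge0 ?subr_ge0.
rewrite -subr_ge0.
have -> : lam ^+ 3 * ((1 - pd) * Z + pd) - lam * ((1 - pd) ^+ 2 * lam ^+ 2 * Z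
            + pd * (1 - pd) * lam * (1 + Z) + pd ^+ 2)
          = pd * (1 - pd) * (1 + Z) * (lam ^+ 3 - lam ^+ 2) + pd ^+ 2 * (lam ^+ 3 - lam).
  by ring.
lra.
Qed.

Section ContractionParameters.
Variables (R : realType) (r : nat) (pd : R).
Hypotheses (r_gt0 : (0 < r)%N) (pd01 : 0 <= pd <= 1) (rq2_lt1 : r%:R * (1 - pd) ^+ 2 < 1).
Local Notation q := (1 - pd).

Lemma exists_subfixed_point : exists2 G : R, 1 < G & q * com_factor r pd G + pd < G.
Proof.
have [k_lt1 pd0 pd1] := And3 rq2_lt1 (andP pd01).1 (andP pd01).2.
have r_ge1 : 1 <= r%:R :> R by rewrite ler1n.
have k_ge0 : 0 <= r%:R * q ^+ 2 by rewrite mulr_ge0 ?sqr_ge0.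
(* [G |-> q (pd + q G)^r + pd] is 1 at G = 1 with slope r q^2 < 1, so it stays
   below the diagonal on some interval (1, 1 + d]. *)
pose d := (1 - r%:R * q ^+ 2) / (2 * r%:R).
have d_gt0 : 0 < d by rewrite divr_gt0 //; lra.
have rd : r%:R * d = (1 - r%:R * q ^+ 2) / 2 by rewrite /d; field; rewrite pnatr_eq0 -lt0n.
pose u := 1 - r%:R * (q * d).
have rqd : r%:R * (q * d) <= (1 - r%:R * q ^+ 2) / 2.
  rewrite mulrCA rd ler_piMl //; lra.
exists (1 + d); first lra.
have Z_ge0 : 0 <= com_factor r pd (1 + d).
  by rewrite exprn_ge0 // addr_ge0 // mulr_ge0 //; lra.
have Zu : com_factor r pd (1 + d) * u <= 1.
  have -> : com_factor r pd (1 + d) = (1 + q * d) ^+ r.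
    by rewrite /com_factor; congr (_ ^+ _); ring.
  by apply: expr_mul_one_sub_le1; rewrite mulr_ge0 //; lra.
have u_gt0 : 0 < u by rewrite /u; lra.
rewrite -(ltr_pM2r u_gt0).
have key : (1 + d) * u - (q + pd * u) = d * (1 - r%:R * q ^+ 2 - r%:R * (q * d)).
  by rewrite /u; ring.
have : 0 < d * (1 - r%:R * q ^+ 2 - r%:R * (q * d)) by rewrite mulr_gt0 //; lra.
have : q * (com_factor r pd (1 + d) * u) <= q * 1 by apply: ler_wpM2l; lra.
nra.
Qed.

Lemma exists_contraction_params : exists G lam : R,
  [/\ 1 < G, 1 < lam & lam * (q ^+ 2 * lam ^+ 2 * com_factor r pd G
                         + pd * q * lam * (1 + com_factor r pd G) + pd ^+ 2) <= G].
Proof.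
have [G G_gt1 subfixed] := exists_subfixed_point.
have Z_ge0 : 0 <= com_factor r pd G.
  exact: le_trans (com_factor_ge1 r pd01 (ltW G_gt1)).
have a_ge0 : 0 <= q * com_factor r pd G + pd.
  by case/andP: pd01 => pd_ge0 pd_le1; rewrite addr_ge0 // mulr_ge0 // subr_ge0.
have [lam lam_gt1 cube_le] := exists_cube_le a_ge0 subfixed.
exists G, lam; split => //.
exact: le_trans (contraction_le_cube pd01 (ltW lam_gt1) Z_ge0) cube_le.
Qed.

End ContractionParameters.

Lemma sqrt_drop_bound (R : realType) r (pd : R) :
  (1 <= r)%N -> 1 - (Num.sqrt r%:R)^-1 < pd -> pd <= 1 ->
  0 <= pd <= 1 /\ r%:R * (1 - pd) ^+ 2 < 1.
Proof.
move=> r_ge1 pd_gt pd_le1; have r_ge0 : 0 <= r%:R :> R by rewrite ler0n.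
have s_ge1 : 1 <= Num.sqrt r%:R :> R by rewrite -[X in X <= _]sqrtr1 ler_sqrt // ler1n.
have sV_le1 : (Num.sqrt r%:R)^-1 <= 1 :> R by rewrite invf_le1 // (lt_le_trans ltr01).
have qs_lt1 : (1 - pd) * Num.sqrt r%:R < 1.
  by rewrite -ltr_pdivlMr ?(lt_le_trans ltr01) // div1r; lra.
split; first by apply/andP; split; lra.
have qs_ge0 : 0 <= (1 - pd) * Num.sqrt r%:R by rewrite mulr_ge0 ?sqrtr_ge0 //; lra.
have := ltr_pM qs_ge0 qs_ge0 qs_lt1 qs_lt1.
by rewrite mulr1 mulrACA -!expr2 sqr_sqrtr // mulrC.
Qed.

Lemma mean_hit_root (R : realType) r (pd : R) :
  (1 <= r)%N -> 0 <= pd <= 1 -> r%:R * (1 - pd) ^+ 2 < 1 ->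
  mean_hit r pd (W [::]) Bot = ((1 + 2 * (1 - pd)) / (1 - r%:R * (1 - pd) ^+ 2))%:E.
Proof.
move=> r_ge1 pd01 rq2_lt1.
set h := (1 + 2 * (1 - pd)) / (1 - r%:R * (1 - pd) ^+ 2).
have hE : h = 1 + (1 - pd) * (2 + r%:R * (1 - pd) * h).
  by rewrite /h; field; rewrite subr_eq0 gt_eqF.
have h_ge0 : 0 <= h by rewrite divr_ge0 //; case/andP: pd01; lra.
have [G [lam [G_gt1 lam_gt1 contraction]]] := exists_contraction_params r_ge1 pd01 rq2_lt1.
have harmonic := hit_pot_harmonic hE.
pose C := domination_const r pd h G lam * G.
apply: (ereal_sup_geometric_gap (C := C) lam_gt1) => N.
- have := trunc_hit_mean_le pd01 (U := hit_pot r pd h) _ _ N (W [::]).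
  rewrite /= /word_cost big_nil addr0; apply=> [s|a /harmonic ->//].
  exact: hit_pot_ge0.
- have := trunc_hit_mean_gap pd01 (ltW (lt_trans ltr01 lam_gt1)) _ _
    harmonic (weight_pot_contract pd01 (ltW G_gt1) (ltW lam_gt1) contraction)
    (hit_pot_le_weight_pot r h_ge0 pd01 G_gt1 lam_gt1) N (W [::]).
  rewrite /= /word_cost /word_weight !big_nil addr0 mulr1; apply=> //.
  exact: domination_const_ge0 h_ge0 pd01 G_gt1 lam_gt1.
Qed.

Theorem theorem3p8 (R : realType) (r : nat) (pd : R) :
  (1 <= r)%N ->
  1 - (Num.sqrt (r%:R : R))^-1 < pd -> pd <= 1 ->
  mean_hit r pd (W [::]) Bot
    = ((1 + 2 * (1 - pd)) / (1 - r%:R * (1 - pd) ^+ 2))%:E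
  /\ (forall (w : seq letter) (x : sel) (y : seq nat),
        valid_word r ((x, y) :: w) ->
        mean_hit r pd (W ((x, y) :: w)) (Pop (W ((x, y) :: w)))
          = mean_hit r pd (W [::]) Bot).
Proof.
move=> r_ge1 pd_gt pd_le1.
have [pd01 rq2_lt1] := sqrt_drop_bound r_ge1 pd_gt pd_le1.
split; first exact: mean_hit_root.
by move=> w x y _; apply: mean_hit_pop.
Qed.
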